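(* Let $G$ be a finite simple connected graph of order $n$ and let $k\ge 2$ be an integer with $k\le n$. Then $W_{tsp,k}(G)\le 2W_k(G)$. Moreover, equality $W_{tsp,k}(G)=2W_k(G)$ holds if and only if one of the following holds: (i) $k=2$; (ii) $k=3$ and $G$ contains no three vertices $u,v,w$ such that $2\max\{d(u,v),d(u,w),d(v,w)\}<d(u,v)+d(u,w)+d(v,w)$ and every choice of three shortest paths between the three pairs $(u,v),(v,w),(w,u)$ consists of pairwise edge-disjoint paths; (iii) $k\ge 4$ and $G$ is a tree.
   Context: For vertices $u,v$, $d(u,v)$ is the graph distance. A walk is a sequence of vertices $(v_1,\dots,v_r)$ with $v_iv_{i+1}\in E(G)$; it is closed if $v_1=v_r$; its length is $r-1$ (the number of edge traversals, counted with multiplicity). For a set $S$ of $k$ vertices, $\mathrm{tsp}_k(S)$ is the length of a shortest closed walk in $G$ visiting all vertices of $S$, and the $k$-TSP-Wiener index is $W_{tsp,k}(G)=\sum_{S\subseteq V,\,|S|=k}\mathrm{tsp}_k(S)$. The Steiner distance $d_k(S)$ is the minimum number of edges of a connected subgraph (equivalently, a subtree) of $G$ containing all vertices of $S$, and the Steiner-Wiener index is $W_k(G)=\sum_{S\subseteq V,\,|S|=k}d_k(S)$. *)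

From mathcomp Require Import all_boot.
Set Implicit Arguments. Unset Strict Implicit. Unset Printing Implicit Defensive.

Section Graphs.
Variables (T : finType) (e : rel T).

Definition simple_graph : Prop := symmetric e /\ irreflexive e.
Definition connected_graph : Prop := forall x y : T, connect e x y.

(* least m < B satisfying P (B if none) *)
Definition nat_min (P : pred nat) (B : nat) : nat := find P (iota 0 B).

(* a walk (v_1,...,v_r) is represented as x :: p with path e x p;
   its length is size p. *)

(* graph distance: shortest walk from x to y (at most #|T|-1 in a connected graph) *)
Definition has_walk_len (x y : T) (m : nat) : bool :=
  [exists p : m.-tuple T, path e x p && (last x p == y)].
Definition dist (x y : T) : nat := nat_min (has_walk_len x y) #|T|.

Definition shortest_path (x y : T) (p : seq T) : Prop :=
  [/\ path e x p, last x p = y & size p = dist x y].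

Definition walk_edges (x : T) (p : seq T) : {set {set T}} :=
  [set [set a.1; a.2] | a in zip (x :: p) p].

Definition has_tsp_walk (S : {set T}) (m : nat) : bool :=
  [exists x : T, exists p : m.-tuple T,
     [&& path e x p, last x p == x & [forall v in S, v \in x :: p]]].
(* tsp_k(S): length of a shortest closed walk visiting S.  In a connected
   graph a closed walk of length <= 2(#|T|-1) visits every vertex, so the
   bound 2*#|T| does not cut off the minimum. *)
Definition tsp (S : {set T}) : nat := nat_min (has_tsp_walk S) (#|T|.*2).

Definition conn_subgraph_containing (S U : {set T}) (F : {set {set T}}) : bool :=
  [&& S \subset U,
      [forall f in F, exists x, exists y, [&& f == [set x; y], e x y, x \in U & y \in U]] &
      [forall x in U, forall y in U, connect (fun a b => [set a; b] \in F) x y]].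
Definition has_steiner_tree (S : {set T}) (m : nat) : bool :=
  [exists U : {set T}, exists F : {set {set T}},
     conn_subgraph_containing S U F && (#|F| == m)].
(* Steiner distance d_k(S): least number of edges of a connected subgraph
   containing S (the bound exceeds every possible number of edges). *)
Definition steiner (S : {set T}) : nat :=
  nat_min (has_steiner_tree S) (#|{set T}|.+1).

Definition tsp_wiener (k : nat) : nat := \sum_(S : {set T} | #|S| == k) tsp S.
Definition steiner_wiener (k : nat) : nat := \sum_(S : {set T} | #|S| == k) steiner S.

Definition is_tree : Prop :=
  connected_graph /\ forall c : seq T, 3 <= size c -> ~~ (cycle e c && uniq c).

Definition bad_triple (u v w : T) : Prop :=
  2 * maxn (dist u v) (maxn (dist u w) (dist v w)) < dist u v + dist u w + dist v w /\
  forall p1 p2 p3 : seq T,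
    shortest_path u v p1 -> shortest_path v w p2 -> shortest_path w u p3 ->
    [/\ [disjoint walk_edges u p1 & walk_edges v p2],
        [disjoint walk_edges v p2 & walk_edges w p3] &
        [disjoint walk_edges u p1 & walk_edges w p3]].

End Graphs.

(* A closed walk around a spanning tree of a minimum Steiner subgraph of S passes
   through S, so tsp S <= 2 d_k(S); the Wiener sums compare termwise, and they are equal
   iff equality holds for every k-set.  For k = 2 both sides are 2 d(u,v).  For k = 3,
   tsp is the perimeter of the triangle and d_3 is the least total distance to a vertex m,
   so equality asks for a median m lying on geodesics between all three pairs; by
   induction on the perimeter, two shortest paths that share an edge can be shortcut at
   an endpoint of that edge, so a median exists unless the triple is bad.  For k >= 4, in
   a tree the length of a closed walk is at least twice its number of edges, which gives
   equality.  Otherwise take a shortest cycle, of length g: if g <= k, extending it by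
   detours to k vertices gives a closed walk of length 2k - g < 2(k - 1) <= 2 d_k; if
   g > k, choose k vertices of the cycle including a vertex x, both its neighbours and
   the vertex h = g/2 steps away, which is at distance h from x; a Steiner tree then has
   more than h edges, and 2(h + 1) > g >= tsp. *)

From mathcomp Require Import all_boot zify.

Set Implicit Arguments. Unset Strict Implicit. Unset Printing Implicit Defensive.

Lemma nat_min_le (P : pred nat) B m : P m -> nat_min P B <= m.
Proof.
move=> Pm; rewrite /nat_min; case: (leqP B m) => hB.
  by apply: leq_trans (find_size _ _) _; rewrite size_iota.
rewrite leqNgt; apply/negP => /(before_find 0).
by rewrite nth_iota // add0n Pm.
Qed.

Lemma nat_minP (P : pred nat) B : nat_min P B < B -> P (nat_min P B).
Proof.
rewrite /nat_min => lt_min_B.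
have hasP : has P (iota 0 B) by rewrite has_find size_iota.
by have := nth_find 0 hasP; rewrite nth_iota // add0n.
Qed.

Lemma set2_inj (T : finType) (a b c d : T) : [set a; b] = [set c; d] ->
  (a = c /\ b = d) \/ (a = d /\ b = c).
Proof.
move=> eq_ab_cd.
have aS : a \in [set c; d] by rewrite -eq_ab_cd set21.
have bS : b \in [set c; d] by rewrite -eq_ab_cd set22.
have cS : c \in [set a; b] by rewrite eq_ab_cd set21.
have dS : d \in [set a; b] by rewrite eq_ab_cd set22.
case/set2P: aS => ea; case/set2P: bS => eb; subst a b.
- by move: dS; rewrite !inE orbb => /eqP ->; left.
- by left.
- by right.
- by move: cS; rewrite !inE orbb => /eqP ->; left.
Qed.

Lemma card_lt_exists_notin (T : finType) (A B : {set T}) :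
  #|A| < #|B| -> exists2 b, b \in B & b \notin A.
Proof.
move=> ltAB; apply/subsetPn; apply: contraTN ltAB => /subset_leq_card.
by rewrite leqNgt.
Qed.

Lemma exists_set_between (T : finType) (A B : {set T}) t :
  A \subset B -> #|A| + t <= #|B| ->
  exists S : {set T}, [/\ A \subset S, S \subset B & #|S| = #|A| + t].
Proof.
move=> sAB; elim: t => [|t IH] ht; first by exists A; rewrite addn0 subxx.
have [|S [sAS sSB cardS]] := IH; first lia.
have [|b bB bNS] := @card_lt_exists_notin _ S B; first lia.
exists (b |: S); split.
- exact: subset_trans sAS (subsetUr _ _).
- by rewrite subUset sub1set bB sSB.
- by rewrite cardsU1 bNS cardS addnS.
Qed.

Lemma card3_set (T : finType) (S : {set T}) : #|S| = 3 -> exists u v w, S = [set u; v; w].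
Proof.
move=> cardS; have /set0Pn[u uS] : S != set0 by rewrite -card_gt0 cardS.
have /cards2P[v [w [_ Suvw]]] : #|S :\ u| == 2.
  by move: cardS; rewrite (cardsD1 u) uS add1n => -[->].
by exists u, v, w; rewrite -setUA -Suvw setD1K.
Qed.

Lemma head_neq_last (T : eqType) (x : T) (p : seq T) :
  uniq p -> 1 < size p -> head x p != last x p.
Proof.
case: p => [|a [|c p]] //= /andP[aNp _] _.
by apply: contraNneq aNp => ->; exact: mem_last.
Qed.

(** * Walks and their edge sets *)

Section Walks.
Variable T : finType.
Implicit Types (r : rel T) (x y z : T) (p q : seq T) (V : {set T}) (F : {set {set T}}).

Definition edge_rel F : rel T := fun a b => [set a; b] \in F.

Lemma edge_relC F : symmetric (edge_rel F).
Proof. by move=> a b; rewrite /edge_rel setUC. Qed.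

Lemma connect_uniq_path r x y : connect r x y ->
  exists p, [/\ path r x p, last x p = y & uniq (x :: p)].
Proof. by case/connectP=> p rp ->; case: (shortenP rp) => q rq uq _; exists q. Qed.

Lemma path_exit r V x p : path r x p -> x \in V -> last x p \notin V ->
  exists a b, [/\ r a b, a \in V & b \notin V].
Proof.
elim: p x => [|y p IH] x /=; first by move=> _ ->.
case/andP=> rxy yp xV lastNV; case yV: (y \in V); first exact: IH y yp yV lastNV.
by exists x, y; rewrite yV.
Qed.

Lemma path_first_hit V x p : x \notin V -> last x p \in V ->
  exists p1 m p2, [/\ p = rcons p1 m ++ p2, m \in V & {in x :: p1, forall z, z \notin V}].
Proof.
elim: p x => [|y p IH] x /=; first by move=> /negPf ->.
move=> xNV lastV; case yV: (y \in V).
  by exists [::], y, p; split=> // z; rewrite inE => /eqP ->.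
have [p1 [m [p2 [-> mV outV]]]] := IH y (negbT yV) lastV.
exists (y :: p1), m, p2; split=> // z; rewrite in_cons => /orP[/eqP -> // | /outV //].
Qed.

Lemma closed_walk_rotate r x p u : path r x p -> last x p = x -> u \in x :: p ->
  exists p', [/\ path r u p', last u p' = u, size p' = size p & {subset x :: p <= u :: p'}].
Proof.
move=> rp lastp up; case/splitPl: up rp lastp => p1 p2 lastp1.
rewrite cat_path last_cat lastp1 => /andP[rp1 rp2] lastp.
exists (p2 ++ p1); split; rewrite ?cat_path ?last_cat ?lastp ?rp2 ?rp1 ?lastp1 ?size_cat 1?addnC //.
move=> z zp; rewrite in_cons mem_cat; rewrite in_cons mem_cat in zp.
case/or3P: zp => [/eqP -> | -> | ->]; rewrite ?orbT //.
by have := mem_last u p2; rewrite lastp in_cons => /orP[->|->]; rewrite ?orbT.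
Qed.

Lemma mem_cat_head x p q z : z \in x :: p -> z \in x :: p ++ q.
Proof. by rewrite !in_cons mem_cat => /orP[->|->]; rewrite ?orbT. Qed.

Lemma mem_cat_last x p q z : z \in last x p :: q -> z \in x :: p ++ q.
Proof.
rewrite in_cons => /orP[/eqP -> | zq]; first by apply: mem_cat_head; exact: mem_last.
by rewrite in_cons mem_cat zq !orbT.
Qed.

Definition reverse_walk x p := rev (belast x p).

Lemma size_reverse_walk x p : size (reverse_walk x p) = size p.
Proof. by rewrite size_rev size_belast. Qed.

Lemma last_reverse_walk x p : last (last x p) (reverse_walk x p) = x.
Proof. by case: p => //= y p; rewrite /reverse_walk rev_cons last_rcons. Qed.

Lemma path_reverse_walk r x p : symmetric r -> path r x p ->
  path r (last x p) (reverse_walk x p).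
Proof. by move=> rC; rewrite rev_path; apply: sub_path => a b; rewrite /= rC. Qed.

Lemma walk_edges_nil x : walk_edges x [::] = set0.
Proof. by apply/setP => f; rewrite inE; apply/imsetP => -[a]. Qed.

Lemma walk_edges_cons x y p : walk_edges x (y :: p) = [set x; y] |: walk_edges y p.
Proof.
apply/setP => f; rewrite /walk_edges /= !inE; apply/imsetP/idP.
  case=> a; rewrite inE => /orP[/eqP -> -> | ha ->]; first by rewrite eqxx.
  by apply/orP; right; apply/imsetP; exists a.
case/orP => [/eqP -> | /imsetP[a ha ->]]; first by exists (x, y); rewrite ?inE ?eqxx.
by exists a => //; rewrite inE ha orbT.
Qed.

Lemma walk_edges_cat x p q :
  walk_edges x (p ++ q) = walk_edges x p :|: walk_edges (last x p) q.
Proof.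
elim: p x => [|y p IH] x /=; first by rewrite walk_edges_nil set0U.
by rewrite !walk_edges_cons IH setUA.
Qed.

Lemma walk_edges_reverse x p : walk_edges (last x p) (reverse_walk x p) = walk_edges x p.
Proof.
elim: p x => [|y p IH] x //=.
rewrite /reverse_walk rev_cons -cats1 walk_edges_cat IH last_reverse_walk.
by rewrite !walk_edges_cons walk_edges_nil setU0 setUC [[set y; x]]setUC.
Qed.

Lemma walk_edges_split x p f : f \in walk_edges x p ->
  exists p1 b p2, p = p1 ++ b :: p2 /\ f = [set last x p1; b].
Proof.
elim: p x => [|y p IH] x; first by rewrite walk_edges_nil inE.
rewrite walk_edges_cons => /setU1P[-> | /IH[p1 [b [p2 [-> ->]]]]].
  by exists [::], y, p.
by exists (y :: p1), b, p2.
Qed.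

Lemma walk_edges_endpoint x p f z : f \in walk_edges x p -> z \in f -> z \in x :: p.
Proof.
case/walk_edges_split => p1 [b [p2 [-> ->]]] /set2P[->|->].
  by apply: mem_cat_head; exact: mem_last.
by rewrite in_cons mem_cat in_cons eqxx !orbT.
Qed.

Lemma walk_edges_edge r x p f : path r x p -> f \in walk_edges x p ->
  exists a b, [/\ f = [set a; b], r a b, a \in x :: p & b \in x :: p].
Proof.
move=> rp fp; have endp := walk_edges_endpoint fp.
case/walk_edges_split: fp rp endp => p1 [b [p2 [-> ->]]].
rewrite cat_path /= => /and3P[_ rab _] endp.
by exists (last x p1), b; split=> //; apply: endp; rewrite !inE eqxx ?orbT.
Qed.

Lemma walk_edges_rcons_meet x p m f : f \in walk_edges x (rcons p m) ->
  exists2 z, z \in f & z \in x :: p.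
Proof.
elim: p x => [|y p IH] x /=.
  by rewrite walk_edges_cons walk_edges_nil setU0 inE => /eqP ->; exists x; rewrite !inE eqxx.
rewrite walk_edges_cons => /setU1P[-> | /IH [z zf zp]].
  by exists x; rewrite !inE eqxx.
by exists z => //; rewrite in_cons zp orbT.
Qed.

Lemma card_walk_edges x p : #|walk_edges x p| <= size p.
Proof.
elim: p x => [|y p IH] x; first by rewrite walk_edges_nil cards0.
by rewrite walk_edges_cons cardsU1 /=; have := IH y; case: (_ \notin _) => /=; lia.
Qed.

Lemma card_walk_edges_uniq x p : uniq (x :: p) -> #|walk_edges x p| = size p.
Proof.
elim: p x => [|y p IH] x; first by rewrite walk_edges_nil cards0.
move=> /= /andP[xNp up]; rewrite walk_edges_cons cardsU1 IH //.
suff -> : [set x; y] \notin walk_edges y p by [].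
by apply/negP => /walk_edges_endpoint /(_ (set21 x y)); apply/negP.
Qed.

Lemma walk_edges_sub F x p : path (edge_rel F) x p -> walk_edges x p \subset F.
Proof.
elim: p x => [|y p IH] x /=; first by rewrite walk_edges_nil sub0set.
by case/andP=> Fxy yp; rewrite walk_edges_cons subUset sub1set [_ \in F]Fxy IH.
Qed.

Lemma connect_walk_edges x p z : z \in x :: p -> connect (edge_rel (walk_edges x p)) x z.
Proof.
elim: p x => [|y p IH] x; first by rewrite inE => /eqP ->; exact: connect0.
rewrite inE => /orP[/eqP -> | zp]; first exact: connect0.
apply: (@connect_trans _ _ y).
  by apply: connect1; rewrite /edge_rel walk_edges_cons setU11.
apply: connect_sub (IH _ zp) => a b ab; apply: connect1.
by rewrite /edge_rel walk_edges_cons setU1r.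
Qed.

End Walks.

Lemma not_uniq_first_repeat (T : eqType) (s : seq T) : ~~ uniq s ->
  exists A y M B, s = A ++ y :: M ++ y :: B /\ uniq (y :: M).
Proof.
elim/last_ind: s => [|s z IH] //.
rewrite rcons_uniq negb_and negbK; case us: (uniq s); last first.
  move=> _; have [A [y [M [B [-> uyM]]]]] := IH (negbT us).
  by exists A, y, M, (rcons B z); rewrite !rcons_cat /= rcons_cat.
rewrite orbF => zs; case/splitPr: zs us => A M us.
exists A, z, M, [::]; split; first by rewrite rcons_cat /= -cats1.
by move: us; rewrite cat_uniq => /and3P[_ _].
Qed.

(** * Growing closed walks *)

Section ClosedWalks.
Variables (T : finType) (r : rel T).
Hypothesis r_sym : symmetric r.
Implicit Types (x y z : T) (p : seq T).

Local Notation component x := [set y | connect r x y].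

Lemma closed_walk_detour x p a b : path r x p -> last x p = x -> a \in x :: p -> r a b ->
  exists p', [/\ path r x p', last x p' = x, size p' = (size p).+2 &
    [set z in x :: p'] = b |: [set z in x :: p]].
Proof.
move=> rp lastp ap rab; case/splitPl: ap rp lastp => p1 p2 last_p1.
rewrite cat_path last_cat last_p1 => /andP[rp1 rp2] lastp.
exists (p1 ++ b :: a :: p2); split.
- by rewrite cat_path rp1 last_p1 /= rab r_sym rab rp2.
- by rewrite last_cat last_p1.
- by rewrite !size_cat /= addnS addnS.
apply/setP => z; rewrite !inE !mem_cat !inE.
have za : z == a -> (z == x) || (z \in p1).
  by move/eqP => ->; rewrite -last_p1; have := mem_last x p1; rewrite inE.
case: (z == b); rewrite ?orbT //=.
by case zaE: (z == a); rewrite ?orbT //=; case/orP: (za zaE) => ->; rewrite ?orbT.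
Qed.

Lemma closed_walk_grow x p0 t : path r x p0 -> last x p0 = x ->
  #|[set z in x :: p0]| + t <= #|component x| ->
  exists p, [/\ path r x p, last x p = x,
    [set z in x :: p0] \subset [set z in x :: p],
    #|[set z in x :: p]| = #|[set z in x :: p0]| + t & size p = size p0 + 2 * t].
Proof.
move=> rp0 lastp0; elim: t => [|t IH] ht; first by exists p0; rewrite subxx !addn0.
have [|p [rp lastp subp cardp sizep]] := IH; first lia.
set V := [set z in x :: p] in subp cardp *.
have [|b bR bNV] := @card_lt_exists_notin _ V (component x); first lia.
move: bR; rewrite inE => /connectP[q rq b_last]; rewrite b_last in bNV.
have xV : x \in V by rewrite inE mem_head.
have [a [b' [rab' aV b'NV]]] := path_exit rq xV bNV.
move: aV; rewrite inE => ap.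
have [p' [rp' lastp' sizep' setp']] := closed_walk_detour rp lastp ap rab'.
exists p'; split=> //.
- by rewrite setp'; apply: subset_trans subp (subsetUr _ _).
- by rewrite setp' cardsU1 b'NV cardp addnS.
- by rewrite sizep' sizep mulnS addnCA add2n.
Qed.

Lemma closed_walk_spanning x : exists p, [/\ path r x p, last x p = x,
  [set z in x :: p] = component x & size p = 2 * #|component x|.-1].
Proof.
have card_x : #|[set z in [:: x]]| = 1.
  by rewrite (_ : [set z in [:: x]] = [set x]) ?cards1 //; apply/setP => z; rewrite !inE.
have R_gt0 : 0 < #|component x| by apply/card_gt0P; exists x; rewrite inE connect0.
have [|p [rp lastp _ cardp sizep]] := @closed_walk_grow x [::] #|component x|.-1 isT erefl.
  by rewrite card_x; lia.
exists p; split=> //; apply/eqP; rewrite eqEcard cardp card_x add1n prednK // leqnn andbT.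
by apply/subsetP => z; rewrite !inE => zp; apply: path_connect rp _ zp.
Qed.

End ClosedWalks.

Lemma card_component_le (T : finType) (F : {set {set T}}) x :
  #|[set y | connect (edge_rel F) x y]| <= #|F| + 1.
Proof.
set R := [set y | connect (edge_rel F) x y].
suff grow t : t < #|R| -> exists (V : {set T}) (E : {set {set T}}),
    [/\ E \subset F, #|V| = t.+1, #|E| = t, x \in V & forall f, f \in E -> f \subset V].
  have R_gt0 : 0 < #|R| by apply/card_gt0P; exists x; rewrite inE connect0.
  have [|_ [E [sEF _ cardE _ _]]] := grow #|R|.-1; first lia.
  by have := subset_leq_card sEF; lia.
elim: t => [|t IH] ltR.
  by exists [set x], set0; rewrite sub0set cards1 cards0 set11; split=> // f; rewrite inE.
have [V [E [sEF cardV cardE xV EV]]] := IH (ltnW ltR).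
have [|b bR bNV] := card_lt_exists_notin (A := V) (B := R); first lia.
move: bR; rewrite inE => /connectP[q Fq b_last]; rewrite b_last in bNV.
have [a [b' [Fab' aV b'NV]]] := path_exit Fq xV bNV.
exists (b' |: V), ([set a; b'] |: E); split.
- by rewrite subUset sub1set [_ \in F]Fab'.
- by rewrite cardsU1 b'NV cardV.
- rewrite cardsU1 cardE; suff -> : [set a; b'] \notin E by [].
  by apply/negP => /EV /subsetP /(_ b' (set22 a b')); apply/negP.
- by rewrite setU1r.
move=> f /setU1P[-> | /EV sfV]; last exact: subset_trans sfV (subsetUr _ _).
by apply/subsetP => z /set2P[->|->]; rewrite !inE ?aV ?eqxx ?orbT.
Qed.

Section Graph.
Variables (T : finType) (e : rel T).
Hypothesis e_sym : symmetric e.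
Hypothesis e_irr : irreflexive e.
Hypothesis e_conn : connected_graph e.

Local Notation d := (dist e).
Implicit Types (x y z u v w m : T) (p q : seq T) (S U : {set T}) (F : {set {set T}}).

(** * Distances *)

Lemma has_walk_lenP x y n :
  reflect (exists p, [/\ path e x p, last x p = y & size p = n]) (has_walk_len e x y n).
Proof.
apply: (iffP existsP) => [[t /andP[ep /eqP lastp]] | [p [ep lastp sizep]]].
  by exists (val t); rewrite size_tuple.
by exists (Tuple (introT eqP sizep)); rewrite /= ep lastp eqxx.
Qed.

Lemma dist_le_path x y p : path e x p -> last x p = y -> d x y <= size p.
Proof. by move=> ep lastp; apply: nat_min_le; apply/has_walk_lenP; exists p. Qed.

Lemma dist_lt_card x y : d x y < #|T|.
Proof.
have [q [eq lastq uq]] := connect_uniq_path (e_conn x y).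
apply: leq_ltn_trans (dist_le_path eq lastq) _.
by have := max_card (mem (x :: q)); rewrite (card_uniqP uq).
Qed.

Lemma shortest_path_exists x y : exists p, shortest_path e x y p.
Proof. by apply/has_walk_lenP; apply: nat_minP; exact: dist_lt_card. Qed.

Lemma distxx x : d x x = 0.
Proof. by apply/eqP; rewrite -leqn0; apply: (@dist_le_path x x [::]). Qed.

Lemma dist_le1 x y : e x y -> d x y <= 1.
Proof. by move=> exy; apply: (@dist_le_path x y [:: y]); rewrite /= ?exy. Qed.

Lemma dist_triangle x y z : d x z <= d x y + d y z.
Proof.
have [p [ep lastp <-]] := shortest_path_exists x y.
have [q [eq lastq <-]] := shortest_path_exists y z.
by rewrite -size_cat; apply: dist_le_path; rewrite ?cat_path ?last_cat lastp ?ep ?eq.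
Qed.

Lemma distC x y : d x y = d y x.
Proof.
wlog suff: x y / d y x <= d x y by move=> le; apply/eqP; rewrite eqn_leq !le.
have [p [ep <- <-]] := shortest_path_exists x y.
rewrite -(size_reverse_walk x); apply: dist_le_path (path_reverse_walk e_sym ep) _.
exact: last_reverse_walk.
Qed.

Lemma shortest_path_reverse x y p : shortest_path e x y p ->
  shortest_path e y x (reverse_walk x p).
Proof.
case=> ep lastp sizep; rewrite -lastp; split; rewrite ?last_reverse_walk //.
- exact: path_reverse_walk.
- by rewrite size_reverse_walk sizep lastp distC.
Qed.

Lemma shortest_path_cat x y z p q : shortest_path e x y p -> shortest_path e y z q ->
  d x y + d y z = d x z -> shortest_path e x z (p ++ q).
Proof.
case=> ep lastp <- [eq lastq <-] dxz.
by split; rewrite ?cat_path ?last_cat ?size_cat ?lastp ?ep ?eq.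
Qed.

Lemma shortest_path_dist x y p1 p2 : shortest_path e x y (p1 ++ p2) ->
  d x (last x p1) = size p1 /\ d (last x p1) y = size p2.
Proof.
case; rewrite cat_path last_cat size_cat => /andP[ep1 ep2] lastp sizep.
have le1 := dist_le_path ep1 erefl; have le2 := dist_le_path ep2 lastp.
by have := dist_triangle x (last x p1) y; split; lia.
Qed.

Lemma dist_through_path x y p m : path e x p -> last x p = y -> m \in x :: p ->
  d x m + d m y <= size p.
Proof.
move=> ep lastp mp; case/splitPl: mp ep lastp => p1 p2 lastp1.
rewrite cat_path last_cat size_cat lastp1 => /andP[ep1 ep2] lastp.
exact: leq_add (dist_le_path ep1 lastp1) (dist_le_path ep2 lastp).
Qed.

(** * Closed walks and Steiner subgraphs *)

Lemma has_tsp_walkP S n :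
  reflect (exists x p, [/\ path e x p, last x p = x, {subset S <= x :: p} & size p = n])
          (has_tsp_walk e S n).
Proof.
apply: (iffP existsP).
  case=> x /existsP[t /and3P[ep /eqP lastp /forall_inP Sp]].
  by exists x, (val t); rewrite size_tuple.
case=> x [p [ep lastp Sp sizep]]; exists x; apply/existsP.
by exists (Tuple (introT eqP sizep)); rewrite /= ep lastp eqxx; apply/forall_inP.
Qed.

Lemma tsp_le_walk S x p : path e x p -> last x p = x -> {subset S <= x :: p} ->
  tsp e S <= size p.
Proof. by move=> ep lastp Sp; apply: nat_min_le; apply/has_tsp_walkP; exists x, p. Qed.

Lemma tsp_attained S x0 :
  exists x p, [/\ path e x p, last x p = x, {subset S <= x :: p} & size p = tsp e S].
Proof.
apply/has_tsp_walkP; apply: nat_minP.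
have [p [ep lastp Vp sizep]] := closed_walk_spanning e_sym x0.
have compT : [set y | connect e x0 y] = setT by apply/setP => y; rewrite !inE e_conn.
rewrite compT cardsT in Vp sizep.
have /(tsp_le_walk ep lastp) : {subset S <= x0 :: p}.
  by move=> z _; move/setP/(_ z): Vp; rewrite !inE.
have T_gt0 : 0 < #|T| by apply/card_gt0P; exists x0.
move=> le_tsp; change (tsp e S < #|T|.*2); rewrite -muln2; lia.
Qed.

Lemma conn_subgraph_edge S U F a b : conn_subgraph_containing e S U F ->
  edge_rel F a b -> [/\ e a b, a \in U & b \in U].
Proof.
case/and3P=> _ /forall_inP FU _ /FU /existsP[c /existsP[c' /and4P[/eqP abc ecc' cU c'U]]].
by case: (set2_inj abc) => -[-> ->]; rewrite // e_sym.
Qed.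

Lemma conn_subgraph_connect S U F a b : conn_subgraph_containing e S U F ->
  a \in U -> b \in U -> connect (edge_rel F) a b.
Proof. by case/and3P=> _ _ /forall_inP UF aU bU; move/forall_inP: (UF a aU); apply. Qed.

Lemma conn_subgraph_path S U F x p : conn_subgraph_containing e S U F ->
  path (edge_rel F) x p -> x \in U -> {subset x :: p <= U}.
Proof.
move=> sub; elim: p x => [|y p IH] x /=; first by move=> _ xU z; rewrite inE => /eqP ->.
case/andP=> Fxy Fp xU z; rewrite in_cons => /orP[/eqP -> // | zp].
by have [_ _ yU] := conn_subgraph_edge sub Fxy; exact: IH Fp yU z zp.
Qed.

Lemma conn_subgraph_card S U F : conn_subgraph_containing e S U F -> #|U| <= #|F| + 1.
Proof.
move=> sub; have [->|[x xU]] := set_0Vmem U; first by rewrite cards0.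
apply: leq_trans (card_component_le F x); apply: subset_leq_card.
by apply/subsetP => z zU; rewrite inE (conn_subgraph_connect sub).
Qed.

Lemma conn_subgraph_walk S x p : path e x p -> {subset S <= x :: p} ->
  conn_subgraph_containing e S [set z in x :: p] (walk_edges x p).
Proof.
move=> ep Sp; apply/and3P; split.
- by apply/subsetP => z /Sp; rewrite inE.
- apply/forall_inP => f fp; have [a [b [-> eab ap bp]]] := walk_edges_edge ep fp.
  by apply/existsP; exists a; apply/existsP; exists b; rewrite eqxx eab !in_set ap bp.
apply/forall_inP => a; rewrite inE => ap; apply/forall_inP => b; rewrite inE => bp.
apply: connect_trans (connect_walk_edges bp).
by rewrite (sym_connect_sym (@edge_relC _ _)); exact: connect_walk_edges.
Qed.

Lemma steiner_le S U F : conn_subgraph_containing e S U F -> steiner e S <= #|F|.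
Proof.
move=> sub; apply: nat_min_le.
by apply/existsP; exists U; apply/existsP; exists F; rewrite sub eqxx.
Qed.

Lemma steiner_le_walk S x p : path e x p -> {subset S <= x :: p} ->
  steiner e S <= #|walk_edges x p|.
Proof. by move=> ep Sp; apply: steiner_le (conn_subgraph_walk ep Sp). Qed.

Lemma steiner_attained S :
  exists U F, conn_subgraph_containing e S U F /\ #|F| = steiner e S.
Proof.
set E := [set [set a.1; a.2] | a in [pred a : T * T | e a.1 a.2]].
have : has_steiner_tree e S (steiner e S).
  apply: nat_minP; apply: (@leq_ltn_trans #|E|); last by rewrite ltnS max_card.
  apply: (@steiner_le S setT); apply/and3P; split; first exact: subsetT.
    apply/forall_inP => f /imsetP[[a b]]; rewrite inE /= => eab ->.
    by apply/existsP; exists a; apply/existsP; exists b; rewrite eqxx eab !inE.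
  apply/forall_inP => a _; apply/forall_inP => b _.
  apply: connect_sub (e_conn a b) => u v euv; apply: connect1.
  by apply/imsetP; exists (u, v).
by case/existsP=> U /existsP[F /andP[sub /eqP cardF]]; exists U, F.
Qed.

Lemma card_le_steiner S : #|S| <= steiner e S + 1.
Proof.
have [U [F [sub <-]]] := steiner_attained S.
apply: leq_trans (conn_subgraph_card sub); apply: subset_leq_card.
by case/and3P: sub.
Qed.

Lemma tsp_le_double_steiner S : S != set0 -> tsp e S <= 2 * steiner e S.
Proof.
case/set0Pn=> x xS; have [U [F [sub <-]]] := steiner_attained S.
have xU : x \in U by case/and3P: sub => /subsetP ->.
have [p [Fp lastp Vp sizep]] := closed_walk_spanning (@edge_relC _ F) x.
have Sp : {subset S <= x :: p}.
  move=> z zS; have : z \in [set y | connect (edge_rel F) x y].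
    by rewrite inE (conn_subgraph_connect sub) //; case/and3P: sub => /subsetP ->.
  by rewrite -Vp inE.
have ep : path e x p by apply: sub_path Fp => a b /(conn_subgraph_edge sub) [].
have := tsp_le_walk ep lastp Sp; have := card_component_le F x; rewrite sizep; lia.
Qed.

(** * Acyclic graphs *)

Definition no_cycle_upto L := forall c, 3 <= size c <= L -> ~~ (cycle e c && uniq c).

Lemma closed_walk_backtrack_or_cycle x p : path e x p -> last x p = x -> p != [::] ->
  (exists p1 b p2, p = p1 ++ b :: last x p1 :: p2) \/
  (exists c, [/\ 3 <= size c <= size p, cycle e c & uniq c]).
Proof.
move=> ep lastp p_nil.
have : ~~ uniq (x :: p).
  apply/negP => /= /andP[/negP xNp _]; apply: xNp.
  by case: p ep lastp p_nil => //= y p _ <- _; exact: mem_last.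
case/not_uniq_first_repeat => A [y [M [B [xp uyM]]]].
have eyM : path e y (M ++ y :: B).
  by have : sorted e (x :: p) by []; rewrite xp => /cat_sorted2[_].
have cyM : cycle e (y :: M).
  by move: eyM; rewrite cat_path /= rcons_path => /and3P[-> -> _].
case: M xp uyM eyM cyM => [|b [|b' M]] xp uyM eyM cyM.
- by move: cyM; rewrite /= e_irr.
- left; case: A xp => [|x' A] /= [-> ->]; first by exists [::], b, B.
  by exists (rcons A y), b, B; rewrite last_rcons -cats1 -catA.
- right; exists [:: y, b, b' & M]; split=> //.
  have /(congr1 size) : x :: p = A ++ [:: y, b, b' & M] ++ y :: B by [].
  rewrite /= !size_cat /= !size_cat /=; lia.
Qed.

(* Without short cycles a closed walk contains a backtrack [a, b, a]; cancelling it
   shortens the walk by two and loses at most one edge. *)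
Lemma closed_walk_edges_le L x p : no_cycle_upto L -> size p <= L ->
  path e x p -> last x p = x -> 2 * #|walk_edges x p| <= size p.
Proof.
move=> acyc; elim: {p}(size p) {-2}p (leqnn (size p)) => [|n IH] p le_n le_L ep lastp.
  by case: p le_n {le_L ep lastp} => // _; rewrite walk_edges_nil cards0.
have [-> | p_nil] := eqVneq p [::]; first by rewrite walk_edges_nil cards0.
case: (closed_walk_backtrack_or_cycle ep lastp p_nil) => [[p1 [b [p2 pE]]] | [c [c_size cc uc]]];
  last by have := acyc c; rewrite cc uc; lia.
subst p; set a := last x p1 in ep lastp *.
move: ep; rewrite cat_path /= => /andP[ep1 /and3P[eab eba ep2]].
have ep' : path e x (p1 ++ p2) by rewrite cat_path ep1.
have lastp' : last x (p1 ++ p2) = x by move: lastp; rewrite !last_cat.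
have := IH (p1 ++ p2); rewrite !size_cat /= in le_n le_L * => /(_ _ _ ep' lastp').
have : walk_edges x (p1 ++ b :: a :: p2) \subset [set a; b] |: walk_edges x (p1 ++ p2).
  rewrite !walk_edges_cat !walk_edges_cons -/a; apply/subsetP => f; rewrite !inE setUC.
  by case/orP=> [->|/orP[->|/orP[->|->]]]; rewrite ?orbT.
move/subset_leq_card; rewrite cardsU1; case: (_ \notin _) => /=; lia.
Qed.

Lemma acyclic_double_steiner_le_tsp S x0 :
  (forall c, 3 <= size c -> ~~ (cycle e c && uniq c)) -> 2 * steiner e S <= tsp e S.
Proof.
move=> acyc; have [x [p [ep lastp Sp <-]]] := tsp_attained S x0.
apply: leq_trans (closed_walk_edges_le _ (leqnn _) ep lastp); last by move=> c /andP[/acyc].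
by rewrite leq_mul2l (steiner_le_walk ep Sp).
Qed.

(** * Pairs and triples *)

Lemma closed_walk_perimeter u p v w : path e u p -> last u p = u ->
  v \in u :: p -> w \in u :: p -> d u v + d v w + d w u <= size p.
Proof.
move=> ep lastp vp; case/splitPl: vp ep lastp => p1 p2 lastp1.
rewrite cat_path last_cat lastp1 size_cat in_cons mem_cat => /andP[ep1 ep2] lastp wp.
have [wp1 | wp2] : w \in u :: p1 \/ w \in v :: p2.
  by case/or3P: wp => [/eqP->|wp|wp]; [left; rewrite mem_head | left | right];
     rewrite ?in_cons ?wp ?orbT.
- have := dist_through_path ep1 lastp1 wp1; have := dist_le_path ep2 lastp.
  have := distC u w; have := distC v u; have := distC w v; lia.
- have := dist_through_path ep2 lastp wp2; have := dist_le_path ep1 lastp1; lia.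
Qed.

Lemma tsp_ge_perimeter S u v w : u \in S -> v \in S -> w \in S ->
  d u v + d v w + d w u <= tsp e S.
Proof.
move=> uS vS wS; have [x [p [ep lastp Sp <-]]] := tsp_attained S u.
have [p' [ep' lastp' <- p'_sub]] := closed_walk_rotate ep lastp (Sp u uS).
by apply: (closed_walk_perimeter ep' lastp'); apply/p'_sub/Sp.
Qed.

Lemma tsp_le_perimeter S u v w : {subset S <= [:: u; v; w]} ->
  tsp e S <= d u v + d v w + d w u.
Proof.
move=> Suvw.
have [p [ep lastp <-]] := shortest_path_exists u v.
have [q [eq lastq <-]] := shortest_path_exists v w.
have [r [er lastr <-]] := shortest_path_exists w u.
rewrite -!size_cat -catA; apply: (@tsp_le_walk _ u).
- by rewrite !cat_path ep lastp eq lastq er.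
- by rewrite !last_cat lastp lastq lastr.
move=> z /Suvw /[!mem_seq3] /or3P[] /eqP ->; first exact: mem_head.
  by apply: mem_cat_last; rewrite lastp mem_head.
by rewrite catA; apply: mem_cat_last; rewrite last_cat lastp lastq mem_head.
Qed.

Lemma steiner_le_dist S u v : {subset S <= [:: u; v]} -> steiner e S <= d u v.
Proof.
move=> Suv; have [p [ep lastp <-]] := shortest_path_exists u v.
apply: leq_trans (card_walk_edges u p); apply: steiner_le_walk => // z.
by move=> /Suv /[!mem_seq2] /orP[] /eqP ->; rewrite ?mem_head // -lastp mem_last.
Qed.

Lemma tsp_pair S : #|S| = 2 -> tsp e S = 2 * steiner e S.
Proof.
move=> /eqP/cards2P[u [v [_ Suv]]].
have S_ne0 : [set u; v] != set0 by apply/set0Pn; exists u; exact: set21.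
apply/eqP; rewrite Suv eqn_leq tsp_le_double_steiner //=.
have := tsp_ge_perimeter (set21 u v) (set22 u v) (set22 u v).
have Suv' : {subset [set u; v] <= [:: u; v]} by move=> z; rewrite !inE.
have := steiner_le_dist Suv'; rewrite distxx (distC v u); lia.
Qed.

Lemma closed_walk_there_and_back x q : path e x q ->
  let p := q ++ reverse_walk x q in
  [/\ path e x p, last x p = x & walk_edges x p = walk_edges x q].
Proof.
move=> eq /=; rewrite cat_path last_cat last_reverse_walk walk_edges_cat.
by rewrite walk_edges_reverse setUid eq path_reverse_walk.
Qed.

Lemma steiner_le_star S u v w m : {subset S <= [:: u; v; w]} ->
  steiner e S <= d u m + d v m + d w m.
Proof.
move=> Suvw; rewrite !(distC _ m).
have [pu [epu lastu <-]] := shortest_path_exists m u.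
have [pv [epv lastv <-]] := shortest_path_exists m v.
have [pw [epw lastw <-]] := shortest_path_exists m w.
have [epu' lastu' Eu] := closed_walk_there_and_back epu.
have [epv' lastv' Ev] := closed_walk_there_and_back epv.
have uu : u \in m :: pu ++ reverse_walk m pu by apply: mem_cat_head; rewrite -lastu mem_last.
have vv : v \in m :: pv ++ reverse_walk m pv by apply: mem_cat_head; rewrite -lastv mem_last.
move: (pu ++ _) (pv ++ _) epu' lastu' Eu uu epv' lastv' Ev vv.
move=> qu qv equ lastqu Eu uu eqv lastqv Ev vv.
apply: (@leq_trans #|walk_edges m (qu ++ qv ++ pw)|).
  apply: steiner_le_walk; first by rewrite !cat_path equ lastqu eqv lastqv epw.
  move=> z /Suvw /[!mem_seq3] /or3P[] /eqP ->.
  - exact: mem_cat_head.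
  - by apply: mem_cat_last; rewrite lastqu; apply: mem_cat_head.
  - by rewrite catA; apply: mem_cat_last; rewrite last_cat lastqu lastqv -lastw mem_last.
rewrite !walk_edges_cat lastqu lastqv Eu Ev.
have := leq_card_setU (walk_edges m pu) (walk_edges m pv :|: walk_edges m pw).
have := leq_card_setU (walk_edges m pv) (walk_edges m pw).
have := card_walk_edges m pu; have := card_walk_edges m pv; have := card_walk_edges m pw.
move=> ? ? ? [? _] [? _]; lia.
Qed.

(* [m] is the vertex where a path from [w] in the subgraph first meets the path from [u]
   to [v]. *)
Lemma steiner_star_le S U F u v w : conn_subgraph_containing e S U F ->
  u \in S -> v \in S -> w \in S -> exists m, d u m + d v m + d w m <= #|F|.
Proof.
move=> sub uS vS wS.
have [uU vU wU] : [/\ u \in U, v \in U & w \in U].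
  by case/and3P: sub => /subsetP SU _ _; rewrite !SU.
have Fe a b : edge_rel F a b -> e a b by case/(conn_subgraph_edge sub).
have [P [FP lastP uP]] := connect_uniq_path (conn_subgraph_connect sub uU vU).
have eP := sub_path Fe FP; set V := [set z in u :: P].
case wP: (w \in u :: P).
  exists w; rewrite distxx addn0 (distC v w).
  have := dist_through_path eP lastP wP; have := subset_leq_card (walk_edges_sub FP).
  by rewrite card_walk_edges_uniq // => le_PF le_wP; apply: leq_trans le_wP le_PF.
have [Q [FQ lastQ uQ]] := connect_uniq_path (conn_subgraph_connect sub wU uU).
have wNV : w \notin V by rewrite inE wP.
have lastV : last w Q \in V by rewrite lastQ inE mem_head.
have [q1 [m [q2 [QE mV q1NV]]]] := path_first_hit wNV lastV.
move: FQ uQ; rewrite QE cat_path -cat_cons cat_uniq => /andP[FQ1 _] /and3P[uQ1 _ _].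
have dwm : d w m <= size (rcons q1 m) by apply: dist_le_path (sub_path Fe FQ1) (last_rcons _ _ _).
have PQ1 : [disjoint walk_edges u P & walk_edges w (rcons q1 m)].
  apply/pred0P => f /=; apply/negbTE/negP => /andP[fP /walk_edges_rcons_meet[z zf zq1]].
  by have := q1NV z zq1; rewrite inE (walk_edges_endpoint fP zf).
have sPQ : walk_edges u P :|: walk_edges w (rcons q1 m) \subset F.
  by rewrite subUset !walk_edges_sub.
have /eqP := eq_leqif (leq_card_setU (walk_edges u P) (walk_edges w (rcons q1 m))).
rewrite PQ1 !card_walk_edges_uniq // => cardPQ.
have := subset_leq_card sPQ; rewrite cardPQ.
move: mV dwm; rewrite inE size_rcons => mP dwm cardF; exists m.
by rewrite (distC v m); apply: leq_trans cardF; apply: leq_add (dist_through_path eP lastP mP) dwm.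
Qed.

Definition median u v w m := 2 * (d u m + d v m + d w m) <= d u v + d v w + d w u.

Lemma median_rotate u v w m : median v w u m -> median u v w m.
Proof. by rewrite /median; lia. Qed.

Lemma median_at_vertex u v w :
  d u v + d u w + d v w <= 2 * maxn (d u v) (maxn (d u w) (d v w)) -> exists m, median u v w m.
Proof.
rewrite /median => tri; have := distC u v; have := distC v w; have := distC w u.
have := distxx u; have := distxx v; have := distxx w.
case: (leqP (d v w + d w u) (d u v)) => [le_uv|lt_uv] *; first by exists w; lia.
case: (leqP (d u v + d w u) (d v w)) => [le_vw|lt_vw] *; first by exists u; lia.
by exists v; lia.
Qed.

(* The paths [u -> m -> v] and [v -> m -> w] are shortest and share the edge leaving [m]
   towards [v]. *)
Lemma median_not_bad u v w m : median u v w m -> ~ bad_triple e u v w.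
Proof.
rewrite /median => med [tri disj].
have := dist_triangle u m v; have := dist_triangle v m w; have := dist_triangle w m u.
have := distC m u; have := distC m v; have := distC m w; have := distC u w.
move=> Cuw Cmw Cmv Cmu Twu Tvw Tuv.
have [pu su] := shortest_path_exists m u.
have [pv sv] := shortest_path_exists m v.
have [pw sw] := shortest_path_exists m w.
have Euv : d u m + d m v = d u v by lia.
have Evw : d v m + d m w = d v w by lia.
have Ewu : d w m + d m u = d w u by lia.
have s1 := shortest_path_cat (shortest_path_reverse su) sv Euv.
have s2 := shortest_path_cat (shortest_path_reverse sv) sw Evw.
have s3 := shortest_path_cat (shortest_path_reverse sw) su Ewu.
have [D _ _] := disj _ _ _ s1 s2 s3; case: pv sv D {s1 s2 s3} => [|y pv] [epv lastv sizev] D.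
  by move: sizev => /= dmv; lia.
have f1 : [set m; y] \in walk_edges u (reverse_walk m pu ++ y :: pv).
  case: su => _ lastu _; rewrite -{1}lastu walk_edges_cat last_reverse_walk walk_edges_cons.
  by apply/setUP; right; exact: setU11.
have f2 : [set m; y] \in walk_edges v (reverse_walk m (y :: pv) ++ pw).
  rewrite -{1}lastv walk_edges_cat walk_edges_reverse walk_edges_cons.
  by apply/setUP; left; exact: setU11.
by rewrite (disjointFr D f1) in f2.
Qed.

Lemma shortest_path_edge x y p1 b p2 : shortest_path e x y (p1 ++ b :: p2) ->
  [/\ d x (last x p1) + d (last x p1) y = d x y, d x b = (d x (last x p1)).+1
    & d (last x p1) y = (d b y).+1].
Proof.
move=> sp; have [dxa day] := shortest_path_dist sp.
have [dxb dby] : d x (last x (rcons p1 b)) = size (rcons p1 b) /\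
                 d (last x (rcons p1 b)) y = size p2.
  by apply: shortest_path_dist; rewrite cat_rcons.
case: sp => _ _; rewrite last_rcons size_rcons size_cat /= in dxb dby *.
by rewrite dxa day dxb dby addnS.
Qed.

(* Two shortest paths a -> z -> b sharing an edge both pass through one of its
   endpoints [c], which is then a shortcut for the turning point [z]. *)
Lemma shortest_paths_share_edge a z b pA pB :
  shortest_path e a z pA -> shortest_path e z b pB ->
  ~~ [disjoint walk_edges a pA & walk_edges z pB] ->
  exists c, [/\ 0 < d z c, d a c + d c z = d a z & d z c + d c b = d z b].
Proof.
move=> sA sB /pred0Pn[f /andP[/= fA fB]].
have [p1 [s [p2 [pAE fE]]]] := walk_edges_split fA.
have [q1 [s' [q2 [pBE fE']]]] := walk_edges_split fB.
rewrite pAE in sA; rewrite pBE in sB.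
have [A1 A2 A3] := shortest_path_edge sA; have [B1 B2 B3] := shortest_path_edge sB.
have Czs := distC z s; have Cza := distC z (last a p1).
case: (set2_inj (etrans (esym fE) fE')) => -[<- <-] in B1 B2 B3 *; first by lia.
by exists (last a p1); split; lia.
Qed.

Lemma median_shortcut a z b c m : 0 < d z c ->
  d a c + d c z = d a z -> d z c + d c b = d z b -> median a c b m -> median a z b m.
Proof.
rewrite /median => zc acz zcb; have := dist_triangle z c m.
have := distC c z; have := distC m z; have := distC m c; lia.
Qed.

(* Induction on the perimeter: a shared edge between two of the shortest paths
   yields a triangle with smaller perimeter and the same medians. *)
Lemma median_exists u v w : ~ (exists u v w, bad_triple e u v w) -> exists m, median u v w m.
Proof.
move=> nobad; apply/existsP.
have [n] := ubnP (d u v + d v w + d w u); elim: n u v w => // n IH u v w lt_n.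
case: (boolP [exists m, median u v w m]) => // /existsPn nomed; exfalso.
have {}IH u' v' w' : d u' v' + d v' w' + d w' u' < n -> exists m, median u' v' w' m.
  by move=> lt; apply/existsP; exact: IH.
apply: nobad; exists u, v, w; split.
  rewrite ltnNge; apply/negP => /median_at_vertex[m med].
  by have := nomed m; rewrite med.
have Cuv := distC u v; have Cvw := distC v w; have Cwu := distC w u.
move=> p1 p2 p3 s1 s2 s3; split; apply/negPn/negP.
- case/(shortest_paths_share_edge s1 s2) => c [vc uc cw].
  have [|m med] := IH u c w; first by have := distC c v; lia.
  by have := nomed m; rewrite (median_shortcut vc uc cw med).
- case/(shortest_paths_share_edge s2 s3) => c [wc vc cu].
  have [|m med] := IH v c u; first by have := distC c w; lia.
  by have := nomed m; rewrite (median_rotate (median_shortcut wc vc cu med)).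
- rewrite disjoint_sym; case/(shortest_paths_share_edge s3 s1) => c [uc wc cv].
  have [|m med] := IH w c v; first by have := distC c u; lia.
  by have := nomed m; rewrite (median_rotate (median_rotate (median_shortcut uc wc cv med))).
Qed.

Lemma tsp_triple u v w : tsp e [set u; v; w] = d u v + d v w + d w u.
Proof.
have [uS vS wS] : [/\ u \in [set u; v; w], v \in [set u; v; w] & w \in [set u; v; w]].
  by rewrite !inE !eqxx ?orbT.
apply/eqP; rewrite eqn_leq tsp_ge_perimeter // andbT tsp_le_perimeter //.
by move=> z; rewrite !inE -orbA.
Qed.

Lemma triple_equality_iff_median u v w :
  tsp e [set u; v; w] = 2 * steiner e [set u; v; w] <-> exists m, median u v w m.
Proof.
have [uS vS wS] : [/\ u \in [set u; v; w], v \in [set u; v; w] & w \in [set u; v; w]].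
  by rewrite !inE !eqxx ?orbT.
rewrite /median -tsp_triple; split=> [eq_tsp | [m med]].
  have [U [F [sub cardF]]] := steiner_attained [set u; v; w].
  have [m le_m] := steiner_star_le sub uS vS wS.
  by exists m; rewrite eq_tsp -cardF leq_mul2l le_m orbT.
have S_ne0 : [set u; v; w] != set0 by apply/set0Pn; exists u.
apply/eqP; rewrite eqn_leq tsp_le_double_steiner //=; apply: leq_trans med.
by rewrite leq_mul2l steiner_le_star ?orbT // => z; rewrite !inE -orbA.
Qed.

Lemma bad_triple_card u v w : bad_triple e u v w -> #|[set u; v; w]| = 3.
Proof.
case=> tri _; have Cuv := distC u v; have Cvw := distC v w; have Cuw := distC u w.
have [uv vw uw] : [/\ u != v, v != w & u != w].
  by split; apply/eqP => E; move: tri Cuv Cvw Cuw; rewrite E distxx; lia.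
by rewrite -setUA cardsU1 cards2 !inE negb_or uv uw vw.
Qed.

Lemma triples_equality_iff :
  (forall S, #|S| = 3 -> tsp e S = 2 * steiner e S) <-> ~ exists u v w, bad_triple e u v w.
Proof.
split=> [eq3 [u [v [w bad]]] | nobad S /card3_set[u [v [w ->]]]].
  have /triple_equality_iff_median[m med] := eq3 _ (bad_triple_card bad).
  exact: median_not_bad med bad.
by apply/triple_equality_iff_median; exact: median_exists.
Qed.

(** * Graphs with a cycle *)

Lemma shortest_path_head x y p a : shortest_path e x y p -> a \in p -> e x a -> a = head x p.
Proof.
move=> sp ap; case/splitPr: ap sp => p1 p2 sp exa.
have [_ dxa _] := shortest_path_edge sp; have [dxl _] := shortest_path_dist sp.
by case: p1 dxl dxa {sp} => //= b p1 dxl; have := dist_le1 exa; lia.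
Qed.

(* A path from [x] to [y] in the Steiner tree either is longer than [d x y], or it is
   a shortest path, which can contain only one neighbour of [x]. *)
Lemma dist_lt_steiner S x y a b : x \in S -> y \in S -> a \in S -> b \in S ->
  e x a -> e x b -> a != b -> d x y < steiner e S.
Proof.
move=> xS yS aS bS exa exb ab; have [U [F [sub <-]]] := steiner_attained S.
have SU : {subset S <= U} by case/and3P: sub => /subsetP.
have [P [FP lastP uP]] := connect_uniq_path (conn_subgraph_connect sub (SU x xS) (SU y yS)).
have eP : path e x P by apply: sub_path FP => u v /(conn_subgraph_edge sub) [].
have PU : [set z in x :: P] \subset U.
  by apply/subsetP => z; rewrite inE; apply: conn_subgraph_path sub FP (SU x xS) z.
have cardP : #|[set z in x :: P]| = (size P).+1 by rewrite cardsE (card_uniqP uP).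
suff le_U : d x y + 2 <= #|U|.
  by have := leq_trans le_U (conn_subgraph_card sub); rewrite addn2 addn1 ltnS.
have dP := dist_le_path eP lastP.
case: (ltnP (d x y) (size P)) => [lt_dP | le_Pd].
  by apply: leq_trans (subset_leq_card PU); rewrite cardP addn2 ltnS.
have sizeP : size P = d x y by apply/eqP; rewrite eqn_leq le_Pd dP.
have sP : shortest_path e x y P by [].
have [z zU zNP] : exists2 z, z \in U & z \notin x :: P.
  have xNa : a != x by apply: contraTneq exa => ->; rewrite e_irr.
  have xNb : b != x by apply: contraTneq exb => ->; rewrite e_irr.
  case aP: (a \in x :: P); last by exists a; rewrite ?SU ?aP.
  case bP: (b \in x :: P); last by exists b; rewrite ?SU ?bP.
  move: aP bP; rewrite !in_cons (negbTE xNa) (negbTE xNb) /= => aP bP.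
  by move: ab; rewrite (shortest_path_head sP aP exa) (shortest_path_head sP bP exb) eqxx.
have : z |: [set z in x :: P] \subset U by rewrite subUset sub1set zU PU.
by move/subset_leq_card; rewrite cardsU1 cardP inE zNP sizeP addn2.
Qed.

(* On a shortest cycle [x :: p], no shortcut between [x] and the vertex [h] steps ahead
   exists: it would close a walk shorter than the girth that uses more than half of its
   length in distinct edges. *)
Lemma dist_along_shortest_cycle x p h : uniq (x :: p) -> path e x p ->
  no_cycle_upto (size p) -> h.*2 <= (size p).+1 -> h <= size p ->
  h <= d x (last x (take h p)).
Proof.
move=> up ep short le_h2 le_h; rewrite leqNgt; apply/negP => lt_dh.
set A := take h p in lt_dh; set y := last x A in lt_dh.
have eA : path e x A by move: ep; rewrite -(cat_take_drop h p) cat_path => /andP[].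
have uA : uniq (x :: A).
  by move: up; rewrite -(cat_take_drop h p) -cat_cons cat_uniq => /andP[].
have sizeA : size A = h by rewrite size_take; case: ltnP => // ?; lia.
have [q [eq lastq sizeq]] := shortest_path_exists y x.
have eW : path e x (A ++ q) by rewrite cat_path eA eq.
have lastW : last x (A ++ q) = x by rewrite last_cat lastq.
have /(closed_walk_edges_le short) : size (A ++ q) <= size p.
  by rewrite size_cat sizeA sizeq distC; lia.
move=> /(_ x eW lastW); rewrite walk_edges_cat -/y size_cat sizeA sizeq distC.
have := subset_leq_card (subsetUl (walk_edges x A) (walk_edges y q)).
rewrite card_walk_edges_uniq // sizeA; lia.
Qed.

Lemma shortest_cycle c : 3 <= size c -> cycle e c -> uniq c ->
  exists C, [/\ 3 <= size C, cycle e C, uniq C & no_cycle_upto (size C).-1].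
Proof.
move=> c3 cc uc.
have ex_cyc : exists n, [exists C : n.-tuple T, (3 <= n) && cycle e C && uniq C].
  by exists (size c); apply/existsP; exists (in_tuple c); rewrite c3 cc uc.
case: (ex_minnP ex_cyc) => g /existsP[C /andP[/andP[g3 cC] uC]] gmin.
exists C; rewrite size_tuple; split=> // c' /andP[c'3 c'g]; apply/negP => /andP[cc' uc'].
have : g <= size c' by apply: gmin; apply/existsP; exists (in_tuple c'); rewrite c'3 cc' uc'.
lia.
Qed.

Lemma strict_set_short_cycle x p k : uniq (x :: p) -> path e x (rcons p x) ->
  3 <= (size p).+1 <= k -> k <= #|T| ->
  exists S, #|S| = k /\ tsp e S < 2 * steiner e S.
Proof.
move=> up ep /andP[g3 gk] kT.
have cardV : #|[set z in x :: rcons p x]| = (size p).+1.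
  rewrite -[(size p).+1]/(size (x :: p)) -(card_uniqP up); apply: eq_card => z.
  by rewrite !inE mem_rcons in_cons; case: (z == x).
have compT : [set y | connect e x y] = setT by apply/setP => y; rewrite !inE e_conn.
have [|q [eq lastq _ cardq sizeq]] :=
  closed_walk_grow e_sym (t := k - (size p).+1) ep (last_rcons _ _ _).
  by rewrite compT cardsT cardV; lia.
exists [set z in x :: q]; rewrite cardq cardV; split; first lia.
have Sq : {subset [set z in x :: q] <= x :: q} by move=> z; rewrite inE.
have := tsp_le_walk eq lastq Sq.
have := card_le_steiner [set z in x :: q]; rewrite cardq cardV sizeq size_rcons; lia.
Qed.

Lemma strict_set_long_cycle x p k : uniq (x :: p) -> path e x (rcons p x) ->
  no_cycle_upto (size p) -> 4 <= k <= size p ->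
  exists S, #|S| = k /\ tsp e S < 2 * steiner e S.
Proof.
move=> up; rewrite rcons_path => /andP[ep ex] short /andP[k4 kp].
set h := (size p).+1./2; set y := last x (take h p).
have dxy : h <= d x y by apply: dist_along_shortest_cycle => //; rewrite /h; lia.
have [a [p' pE]] : exists a p', p = a :: p'.
  by case: p {up ep ex short dxy y h} kp => [|a p'] /= kp; [lia | exists a, p'].
set b := last x p.
have exa : e x a by move: ep; rewrite pE => /andP[].
have exb : e x b by rewrite e_sym.
have ab : a != b.
  have up' : uniq (a :: p') by rewrite -pE; case/andP: up.
  have size_p : 1 < size (a :: p') by rewrite -pE; lia.
  by have := head_neq_last x up' size_p; rewrite /b pE.
set A0 := [set z in [:: x; a; b; y]]; set B := [set z in x :: p].
have A0B : A0 \subset B.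
  have ap : a \in p by rewrite pE mem_head.
  have yp : y \in x :: p.
    have := mem_last x (take h p); rewrite -/y in_cons => /orP[/eqP -> | /mem_take yp].
      exact: mem_head.
    by rewrite in_cons yp orbT.
  apply/subsetP => z; rewrite [z \in A0]inE mem_seq4 inE => /or4P[] /eqP -> //.
  - exact: mem_head.
  - by rewrite in_cons ap orbT.
  - exact: mem_last.
have cardA0 : #|A0| <= 4 by rewrite cardsE card_size.
have cardB : #|B| = (size p).+1 by rewrite cardsE (card_uniqP up).
have [|S [A0S SB cardS]] := @exists_set_between _ A0 B (k - #|A0|) A0B; first lia.
exists S; split; first by rewrite cardS subnKC //; exact: leq_trans cardA0 k4.
have SA0 z : z \in A0 -> z \in S by move/(subsetP A0S).
have := dist_lt_steiner (SA0 x _) (SA0 y _) (SA0 a _) (SA0 b _) exa exb ab.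
rewrite !inE !eqxx ?orbT => /(_ isT isT isT isT) lt_steiner.
have Sp : {subset S <= x :: rcons p x}.
  by move=> z /(subsetP SB); rewrite in_set => zp; rewrite in_cons mem_rcons zp orbT.
have ep' : path e x (rcons p x) by rewrite rcons_path ep ex.
have := tsp_le_walk ep' (last_rcons x p x) Sp; rewrite size_rcons => le_tsp.
apply: leq_ltn_trans le_tsp _.
by rewrite mul2n -ltn_half_double; exact: leq_ltn_trans dxy lt_steiner.
Qed.

Lemma cycle_strict_set c k : 3 <= size c -> cycle e c -> uniq c -> 4 <= k <= #|T| ->
  exists S, #|S| = k /\ tsp e S < 2 * steiner e S.
Proof.
move=> c3 cc uc /andP[k4 kT]; have [[|x p] [g3 cC uC short]] := shortest_cycle c3 cc uc => //.
case: (leqP (size (x :: p)) k) => [gk | kg].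
  by apply: (strict_set_short_cycle uC cC _ kT); apply/andP; split; [exact: g3 | exact: gk].
by apply: (strict_set_long_cycle uC cC short); rewrite k4.
Qed.

Lemma tree_equality_iff k : 4 <= k <= #|T| ->
  (forall S, #|S| = k -> tsp e S = 2 * steiner e S) <->
  forall c, 3 <= size c -> ~~ (cycle e c && uniq c).
Proof.
move=> k_bounds; split=> [eq_k c c3 | acyc S cardS].
  apply/negP => /andP[cc uc]; have [S [cardS]] := cycle_strict_set c3 cc uc k_bounds.
  by rewrite eq_k // ltnn.
have S_ne0 : S != set0.
  by rewrite -card_gt0 cardS; case/andP: k_bounds => k4 _; exact: leq_trans k4.
have /set0Pn[x _] := S_ne0.
by apply/eqP; rewrite eqn_leq tsp_le_double_steiner // acyclic_double_steiner_le_tsp.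
Qed.

Lemma equality_iff k : 2 <= k <= #|T| ->
  (forall S, #|S| = k -> tsp e S = 2 * steiner e S) <->
  [\/ k = 2, k = 3 /\ ~ (exists u v w, bad_triple e u v w) | 4 <= k /\ is_tree e].
Proof.
case/andP=> k2 kT; case: (ltngtP k 3) => [k_lt3 | k_gt3 | ->].
- have -> : k = 2 by lia.
  by split=> [_ | _]; [constructor 1 | exact: tsp_pair].
- rewrite tree_equality_iff ?k_gt3 //.
  split=> [acyc | [k_eq2 | [k_eq3 _] | [_ [_ acyc]]] //]; first by constructor 3.
  + by move: k_gt3; rewrite k_eq2.
  + by move: k_gt3; rewrite k_eq3.
- rewrite triples_equality_iff.
  by split=> [nobad | [// | [_ nobad] | [] //]]; first by constructor 2.
Qed.

End Graph.

Theorem theorem1 (T : finType) (e : rel T) (k : nat) :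
  simple_graph e -> connected_graph e -> 2 <= k -> k <= #|T| ->
  tsp_wiener e k <= 2 * steiner_wiener e k /\
  (tsp_wiener e k = 2 * steiner_wiener e k <->
     [\/ k = 2,
         k = 3 /\ ~ (exists u v w : T, bad_triple e u v w)
       | 4 <= k /\ is_tree e]).
Proof.
move=> [e_sym e_irr] e_conn k2 kT.
have le_S (S : {set T}) : #|S| == k -> tsp e S <= 2 * steiner e S.
  by move=> /eqP cardS; apply: tsp_le_double_steiner => //; rewrite -card_gt0 cardS; lia.
have sum_le := leqif_sum (fun S cardS => leqif_eq (le_S S cardS)).
rewrite /tsp_wiener /steiner_wiener big_distrr -(equality_iff e_sym e_irr e_conn) ?k2 //.
split; first exact: sum_le.
split=> [/eqP | eq_S].
  by rewrite (eq_leqif sum_le) => /forall_inP eq_S S /eqP /eq_S /eqP.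
apply/eqP; rewrite (eq_leqif sum_le).
by apply/forall_inP => S /eqP /eq_S ->.
Qed.
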